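(* Let $\tilde i\ge1$ be an integer and let $\alpha_0,\alpha_1,\dots,\alpha_{\tilde i+1}$ be positive real numbers. Then $$\sum_{i=1}^{\tilde i+1}\left[\prod_{j=i+1}^{\tilde i+1}\left(\frac{\alpha_{j-1}}{\alpha_j}\right)^{2^{\tilde i-j+2}}\right]\left(\alpha_i^{2^{\tilde i-i+2}-1}-\alpha_{i-1}^{2^{\tilde i-i+2}-1}\right)\alpha_i^{-2^{\tilde i-i+2}}\le\alpha_{\tilde i+1}^{-1}.$$
   Context: An empty product (when $i=\tilde i+1$) equals $1$. *)

From mathcomp Require Import all_boot all_order all_algebra.

(* With the tail weights P_i := prod_(i < j <= n) (a_(j-1) / a_j)^(e_j) and
   Q_i := P_i / a_i, the recursion P_(i-1) = (a_(i-1) / a_i)^(e_i) P_i turns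
   the i-th summand into Q_i - Q_(i-1). The sum telescopes to
   Q_n - Q_0 = 1 / a_n - Q_0, and Q_0 >= 0. *)
From mathcomp Require Import all_boot all_order all_algebra.
From mathcomp Require Import ring.
Import Order.TTheory GRing.Theory Num.Theory.
Local Open Scope ring_scope.

Section TailWeights.

Variables (n : nat) (e : nat -> nat).

Section Field.

Variables (R : fieldType) (a : nat -> R).

Definition tail_weight (i : nat) : R :=
  \prod_(i.+1 <= j < n.+1) (a j.-1 / a j) ^+ e j.

Lemma tail_weight_pred k :
  (0 < k <= n)%N -> tail_weight k.-1 = (a k.-1 / a k) ^+ e k * tail_weight k.
Proof. by case: k => // k /= hk; rewrite /tail_weight big_ltn. Qed.

Lemma tail_weight_n : tail_weight n = 1.
Proof. by rewrite /tail_weight big_geq. Qed.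

Lemma weighted_term_telescopes k :
  (0 < k <= n)%N -> a k != 0 -> a k.-1 != 0 -> (0 < e k)%N ->
  tail_weight k * (a k ^+ (e k - 1) - a k.-1 ^+ (e k - 1)) * a k ^- e k
  = tail_weight k / a k - tail_weight k.-1 / a k.-1.
Proof.
move=> hk hx hy; rewrite tail_weight_pred //.
case: (e k) => // m _; rewrite subn1 /= !exprS exprMn exprVn.
have hxm : a k ^+ m != 0 by rewrite expf_neq0.
by field; rewrite hx hxm hy.
Qed.

Lemma sum_weighted_terms :
  (forall k, (k <= n)%N -> a k != 0) -> (forall k, (0 < k <= n)%N -> (0 < e k)%N) ->
  \sum_(1 <= k < n.+1)
     tail_weight k * (a k ^+ (e k - 1) - a k.-1 ^+ (e k - 1)) * a k ^- e k
  = (a n)^-1 - tail_weight 0 / a 0.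
Proof.
move=> ha he.
rewrite (telescope_sumr_eq (fun k => tail_weight k.-1 / a k.-1)) //=.
  by rewrite tail_weight_n div1r.
move=> k /andP[hk0 hkn]; have hk : (0 < k <= n)%N by rewrite hk0.
rewrite weighted_term_telescopes ?ha ?he //.
exact: leq_trans (leq_pred k) hkn.
Qed.

End Field.

Arguments tail_weight {R} a i.

Variables (R : realFieldType) (a : nat -> R).
Hypothesis a_gt0 : forall k, (k <= n)%N -> 0 < a k.

Lemma tail_weight_ge0 i : 0 <= tail_weight a i.
Proof.
rewrite /tail_weight big_seq; apply: prodr_ge0 => j.
rewrite mem_index_iota => /andP[hij hjn].
by rewrite exprn_ge0 // divr_ge0 // ltW // a_gt0 // (leq_trans (leq_pred j)).
Qed.

Lemma sum_weighted_terms_le :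
  (forall k, (0 < k <= n)%N -> (0 < e k)%N) ->
  \sum_(1 <= k < n.+1)
     tail_weight a k * (a k ^+ (e k - 1) - a k.-1 ^+ (e k - 1)) * a k ^- e k
  <= (a n)^-1.
Proof.
move=> he; rewrite sum_weighted_terms // => [|k hk]; last by rewrite gt_eqF ?a_gt0.
by rewrite lerBlDr lerDl divr_ge0 ?tail_weight_ge0 // ltW ?a_gt0.
Qed.

End TailWeights.

Theorem lemma9 (R : realFieldType) (it : nat) (a : nat -> R)
  (hit : (1 <= it)%N) (ha : forall k, (k <= it.+1)%N -> 0 < a k) :
  \sum_(1 <= i < it.+2)
     (\prod_(i.+1 <= j < it.+2) (a j.-1 / a j) ^+ (2 ^ (it.+2 - j)))
     * (a i ^+ (2 ^ (it.+2 - i) - 1) - a i.-1 ^+ (2 ^ (it.+2 - i) - 1))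
     * a i ^- (2 ^ (it.+2 - i))
  <= (a it.+1)^-1.
Proof.
have e_gt0 k : (0 < k <= it.+1)%N -> (0 < 2 ^ (it.+2 - k))%N.
  by rewrite expn_gt0.
exact: (@sum_weighted_terms_le it.+1 (fun j => 2 ^ (it.+2 - j))%N R a ha e_gt0).
Qed.
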